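(* Consider the following TOPSIS procedure. Given $n$ alternatives $A_1,\dots,A_n$, $m$ attributes $\mathscr{O}_1,\dots,\mathscr{O}_m$ each classified as benefit or cost, an intuitionistic fuzzy decision matrix $R=(r_{ij})_{n\times m}$ with $r_{ij}=\langle\mu_{ij},\nu_{ij}\rangle\in\tilde{\mathbb{I}}$, real weights $\omega_1,\dots,\omega_m$ with $\omega_j\in(0,1]$ and $\sum_j\omega_j=1$, and a parameter $\lambda\ge1$: (i) normalize: $\bar r_{ij}=\langle\bar\mu_{ij},\bar\nu_{ij}\rangle=r_{ij}$ if $\mathscr{O}_j$ is a benefit attribute and $\bar r_{ij}=\langle\nu_{ij},\mu_{ij}\rangle$ if $\mathscr{O}_j$ is a cost attribute; (ii) ideal points: $\langle\mu_j^+,\nu_j^+\rangle=\langle\max_i\bar\mu_{ij},\min_i\bar\nu_{ij}\rangle$ and $\langle\mu_j^-,\nu_j^-\rangle=\langle\min_i\bar\mu_{ij},\max_i\bar\nu_{ij}\rangle$; (iii) $\mathbf{S}(A_i,\mathbf{A}^+)=1-\sum_{j=1}^m\omega_j\,\varrho^{(\lambda)}(\bar r_{ij},\langle\mu_j^+,\nu_j^+\rangle)$ and $\mathbf{S}(A_i,\mathbf{A}^-)=1-\sum_{j=1}^m\omega_j\,\varrho^{(\lambda)}(\bar r_{ij},\langle\mu_j^-,\nu_j^-\rangle)$; (iv) $\mathscr{C}_i=\frac{\mathbf{S}(A_i,\mathbf{A}^+)}{\mathbf{S}(A_i,\mathbf{A}^+)+\mathbf{S}(A_i,\mathbf{A}^-)}$.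 Then this procedure is increasing with the linear order $\le_{XY}$: if $1\le i_1,i_2\le n$ are such that $\bar r_{i_1j}\le_{XY}\bar r_{i_2j}$ for all $1\le j\le m$, then $\mathscr{C}_{i_1}\le\mathscr{C}_{i_2}$. In particular, it is increasing with Atanassov's order: if $\bar r_{i_1j}\subset\bar r_{i_2j}$ for all $j$, then $\mathscr{C}_{i_1}\le\mathscr{C}_{i_2}$.
   Context: $\tilde{\mathbb{I}}=\{\langle\mu,\nu\rangle\in[0,1]^2\mid\mu+\nu\le1\}$ (intuitionistic fuzzy values). For $\alpha=\langle\mu_\alpha,\nu_\alpha\rangle$: $s(\alpha)=\mu_\alpha-\nu_\alpha$, $h(\alpha)=\mu_\alpha+\nu_\alpha$. Order $\le_{XY}$: $\alpha<_{XY}\beta$ if $s(\alpha)<s(\beta)$, or $s(\alpha)=s(\beta)$ and $h(\alpha)<h(\beta)$; $\alpha\le_{XY}\beta$ means $\alpha<_{XY}\beta$ or $\alpha=\beta$. Atanassov's order: $\langle\mu_1,\nu_1\rangle\subset\langle\mu_2,\nu_2\rangle$ iff $\mu_1\le\mu_2$ and $\nu_1\ge\nu_2$. For $\lambda\ge1$, $\varrho^{(\lambda)}(\alpha,\beta)=\frac{1}{1+2\lambda}(1+\lambda|s(\alpha)-s(\beta)|)$ if $s(\alpha)\ne s(\beta)$ and $\varrho^{(\lambda)}(\alpha,\beta)=\frac{1}{1+2\lambda}|h(\alpha)-h(\beta)|$ if $s(\alpha)=s(\beta)$. *)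

From HB Require Import structures.
From mathcomp Require Import all_boot all_order all_algebra.
Set Implicit Arguments. Unset Strict Implicit. Unset Printing Implicit Defensive.
Import Order.TTheory GRing.Theory Num.Theory.
Local Open Scope ring_scope.

Section IFV.
Variable R : realFieldType.

(* an intuitionistic fuzzy value <mu, nu> is a pair (mu, nu) *)
Definition IFV := (R * R)%type.

Definition is_IFV (a : IFV) : Prop :=
  0 <= a.1 <= 1 /\ 0 <= a.2 <= 1 /\ a.1 + a.2 <= 1.

Definition score (a : IFV) : R := a.1 - a.2.
Definition accuracy (a : IFV) : R := a.1 + a.2.

Definition lt_XY (a b : IFV) : Prop :=
  score a < score b \/ (score a = score b /\ accuracy a < accuracy b).
Definition le_XY (a b : IFV) : Prop := lt_XY a b \/ a = b.

Definition atanassov_le (a b : IFV) : Prop := a.1 <= b.1 /\ a.2 >= b.2.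

Definition rho (lam : R) (a b : IFV) : R :=
  if score a != score b
  then (1 + 2 * lam)^-1 * (1 + lam * `|score a - score b|)
  else (1 + 2 * lam)^-1 * `|accuracy a - accuracy b|.

Section Topsis.
Variables (n m : nat) (benefit : 'I_m -> bool) (r : 'I_n -> 'I_m -> IFV)
  (w : 'I_m -> R) (lam : R).

Definition rbar (i : 'I_n) (j : 'I_m) : IFV :=
  if benefit j then r i j else ((r i j).2, (r i j).1).

(* (ii) ideal points; the neutral elements 0 (for max) and 1 (for min)
   do not affect the value since all entries lie in [0,1] and n >= 1. *)
Definition pos_ideal (j : 'I_m) : IFV :=
  (\big[Num.max/0]_(i < n) (rbar i j).1, \big[Num.min/1]_(i < n) (rbar i j).2).
Definition neg_ideal (j : 'I_m) : IFV :=
  (\big[Num.min/1]_(i < n) (rbar i j).1, \big[Num.max/0]_(i < n) (rbar i j).2).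

Definition S_pos (i : 'I_n) : R :=
  1 - \sum_(j < m) w j * rho lam (rbar i j) (pos_ideal j).
Definition S_neg (i : 'I_n) : R :=
  1 - \sum_(j < m) w j * rho lam (rbar i j) (neg_ideal j).

Definition closeness (i : 'I_n) : R := S_pos i / (S_pos i + S_neg i).
End Topsis.
End IFV.

From Pilot Require Import Defs.
From HB Require Import structures.
From mathcomp Require Import all_boot all_order all_algebra.
From mathcomp Require Import lra.
Import Order.TTheory GRing.Theory Num.Theory.
Set Implicit Arguments. Unset Strict Implicit.
Local Open Scope ring_scope.

(* The positive ideal point dominates, and the negative one is dominated by,
   every normalized entry of its column in Atanassov's order, and Atanassov's
   order refines into the Xu-Yager order.  On the elements below a fixed c the
   distance to c is antitone for the Xu-Yager order: it is 0 at c itself, and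
   otherwise the scores differ, so it is an increasing affine function of the
   score gap.  Dually on the elements above c.  Hence improving an alternative
   attribute by attribute raises its similarity to the positive ideal, lowers
   its similarity to the negative one, and so increases S+ / (S+ + S-). *)

Section IFVOrders.
Variable R : realFieldType.
Implicit Types a b c : IFV R.

Lemma atanassov_le_score a b : atanassov_le a b -> score a <= score b.
Proof. by case: a b => [a1 a2] [b1 b2] [/= h1 h2]; rewrite /score /=; lra. Qed.

Lemma atanassov_le_score_eq a b :
  atanassov_le a b -> score a = score b -> a = b.
Proof.
case: a b => [a1 a2] [b1 b2] [/= h1 h2]; rewrite /score /= => hs.
by congr pair; lra.
Qed.

Lemma atanassov_le_XY a b : atanassov_le a b -> le_XY a b.
Proof.
move=> hab; have [e|lt] := eqVneq (score a) (score b).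
  by right; apply: atanassov_le_score_eq.
by left; left; rewrite lt_neqAle lt atanassov_le_score.
Qed.

Lemma le_XY_score a b : le_XY a b -> score a <= score b.
Proof. by case=> [[/ltW //|[-> _]]|->]. Qed.

Lemma is_IFV_swap a : is_IFV a -> is_IFV (a.2, a.1).
Proof. by case=> h1 [h2 h12]; rewrite /is_IFV /= addrC. Qed.

Lemma is_IFV_bigmax_bigmin n (F : 'I_n -> IFV R) :
  (forall i, is_IFV (F i)) ->
  is_IFV (\big[Num.max/0]_(i < n) (F i).1, \big[Num.min/1]_(i < n) (F i).2).
Proof.
move=> hF; set M := \big[_/_]_(i < n) _; set N := \big[_/_]_(i < n) _.
have M_ge0 : 0 <= M by apply: bigmax_ge_id.
have N_le1 : N <= 1 by apply: bigmin_le_id.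
have N_ge0 : 0 <= N.
  by apply: le_bigmin => // i _; have [_ [/andP[]]] := hF i.
have M_le : M <= 1 - N.
  apply: bigmax_le => [|i _]; first lra.
  have := bigmin_le 1 i (fun i => (F i).2); have [_ [_]] := hF i; rewrite -/N.
  lra.
by rewrite /is_IFV /=; split; [|split]; [apply/andP; split..|]; lra.
Qed.

Lemma atanassov_le_bigmax_bigmin n (F : 'I_n -> IFV R) i :
  atanassov_le (F i)
    (\big[Num.max/0]_(k < n) (F k).1, \big[Num.min/1]_(k < n) (F k).2).
Proof.
by split; [exact: (le_bigmax 0 (fun k => (F k).1))
          | exact: (bigmin_le 1 i (fun k => (F k).2))].
Qed.

Lemma atanassov_le_bigmin_bigmax n (F : 'I_n -> IFV R) i :
  atanassov_le
    (\big[Num.min/1]_(k < n) (F k).1, \big[Num.max/0]_(k < n) (F k).2) (F i).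
Proof.
by split; [exact: (bigmin_le 1 i (fun k => (F k).1))
          | exact: (le_bigmax 0 (fun k => (F k).2))].
Qed.

End IFVOrders.

Section Distance.
Variables (R : realFieldType) (lam : R).
Implicit Types a b c : IFV R.

Lemma rhoxx a : rho lam a a = 0.
Proof. by rewrite /rho eqxx /= subrr normr0 mulr0. Qed.

Lemma rho_ge0 a b : 0 <= lam -> 0 <= rho lam a b.
Proof.
move=> lam_ge0.
have k_ge0 : 0 <= (1 + 2 * lam)^-1 by rewrite invr_ge0; lra.
rewrite /rho; case: ifP => _; apply: mulr_ge0 => //.
by rewrite addr_ge0 ?mulr_ge0.
Qed.

Lemma rho_le1 a b : 0 <= lam -> is_IFV a -> is_IFV b -> rho lam a b <= 1.
Proof.
move=> lam_ge0; case: a b => [a1 a2] [b1 b2]; rewrite /is_IFV /=.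
move=> [/andP[? ?] [/andP[? ?] ?]] [/andP[? ?] [/andP[? ?] ?]].
have k_gt0 : 0 < 1 + 2 * lam by lra.
rewrite /rho /score /accuracy /=; case: ifP => _; rewrite mulrC ler_pdivrMr // mul1r.
  have : `|a1 - a2 - (b1 - b2)| <= 2 by rewrite ler_norml; apply/andP; split; lra.
  nra.
have : `|a1 + a2 - (b1 + b2)| <= 1 by rewrite ler_norml; apply/andP; split; lra.
lra.
Qed.

Lemma rho_upper_le_XY a b c : 0 <= lam ->
  le_XY a b -> atanassov_le b c -> rho lam b c <= rho lam a c.
Proof.
move=> lam_ge0 hab hbc; have sab := le_XY_score hab; have sbc := atanassov_le_score hbc.
have [e|ne] := eqVneq (score b) (score c).
  by rewrite (atanassov_le_score_eq hbc e) rhoxx rho_ge0.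
have lt_bc : score b < score c by rewrite lt_neqAle ne.
have nac : score a != score c by rewrite lt_eqF // (le_lt_trans sab lt_bc).
rewrite /rho ne nac /= ler_pM2l; last by rewrite invr_gt0; lra.
by rewrite lerD2l ler_wpM2l // !ler0_norm; lra.
Qed.

Lemma rho_lower_le_XY a b c : 0 <= lam ->
  le_XY a b -> atanassov_le c a -> rho lam a c <= rho lam b c.
Proof.
move=> lam_ge0 hab hca; have sab := le_XY_score hab; have sca := atanassov_le_score hca.
have [e|ne] := eqVneq (score a) (score c).
  by rewrite -(atanassov_le_score_eq hca (esym e)) rhoxx rho_ge0.
have lt_ca : score c < score a by rewrite lt_neqAle eq_sym ne.
have nbc : score b != score c by rewrite gt_eqF // (lt_le_trans lt_ca sab).
rewrite /rho ne nbc /= ler_pM2l; last by rewrite invr_gt0; lra.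
by rewrite lerD2l ler_wpM2l // !ger0_norm; lra.
Qed.

End Distance.

Section Arithmetic.
Variable R : realFieldType.

Lemma weighted_sum_le1 m (w x : 'I_m -> R) :
  (forall j, 0 <= w j) -> \sum_(j < m) w j = 1 -> (forall j, x j <= 1) ->
  \sum_(j < m) w j * x j <= 1.
Proof.
move=> w_ge0 w_sum x_le1; rewrite -w_sum; apply: ler_sum => j _.
by rewrite -{2}(mulr1 (w j)) ler_wpM2l.
Qed.

Lemma ler_share (a b c d : R) :
  0 <= a -> 0 <= b -> 0 <= d -> a <= c -> d <= b -> a / (a + b) <= c / (c + d).
Proof.
move=> a_ge0 b_ge0 d_ge0 le_ac le_db; have [->|a_neq0] := eqVneq a 0.
  by rewrite mul0r divr_ge0 //; lra.
have a_gt0 : 0 < a by rewrite lt_neqAle eq_sym a_neq0.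
rewrite ler_pdivrMr; last lra.
rewrite mulrAC ler_pdivlMr; last lra.
rewrite !mulrDr [c * a]mulrC lerD2l.
by rewrite (le_trans (ler_wpM2l a_ge0 le_db)) // ler_wpM2r.
Qed.

End Arithmetic.

Section Topsis.
Variables (R : realFieldType) (n m : nat) (benefit : 'I_m -> bool).
Variables (r : 'I_n -> 'I_m -> IFV R) (w : 'I_m -> R) (lam : R).
Hypothesis r_IFV : forall i j, is_IFV (r i j).
Hypothesis w_ge0 : forall j, 0 <= w j.
Hypothesis w_sum : \sum_(j < m) w j = 1.
Hypothesis lam_ge0 : 0 <= lam.

Local Notation rb := (rbar benefit r).
Local Notation pos_ideal := (pos_ideal benefit r).
Local Notation neg_ideal := (neg_ideal benefit r).
Local Notation S_pos := (S_pos benefit r w lam).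
Local Notation S_neg := (S_neg benefit r w lam).

Lemma is_IFV_rbar i j : is_IFV (rb i j).
Proof. by rewrite /rbar; case: (benefit j); last apply: is_IFV_swap. Qed.

Lemma is_IFV_pos_ideal j : is_IFV (pos_ideal j).
Proof. exact: is_IFV_bigmax_bigmin (fun i => rb i j) (is_IFV_rbar ^~ j). Qed.

Lemma is_IFV_neg_ideal j : is_IFV (neg_ideal j).
Proof.
have swapped_IFV i : is_IFV ((rb i j).2, (rb i j).1).
  exact/is_IFV_swap/is_IFV_rbar.
exact: is_IFV_swap (is_IFV_bigmax_bigmin swapped_IFV).
Qed.

Lemma S_pos_ge0 i : 0 <= S_pos i.
Proof.
rewrite /Defs.S_pos subr_ge0; apply: weighted_sum_le1 => // j.
exact: rho_le1 lam_ge0 (is_IFV_rbar i j) (is_IFV_pos_ideal j).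
Qed.

Lemma S_neg_ge0 i : 0 <= S_neg i.
Proof.
rewrite /Defs.S_neg subr_ge0; apply: weighted_sum_le1 => // j.
exact: rho_le1 lam_ge0 (is_IFV_rbar i j) (is_IFV_neg_ideal j).
Qed.

Section Monotonicity.
Variables i1 i2 : 'I_n.
Hypothesis le12 : forall j, le_XY (rb i1 j) (rb i2 j).

Lemma S_pos_le_XY : S_pos i1 <= S_pos i2.
Proof.
rewrite lerD2l lerN2; apply: ler_sum => j _; rewrite ler_wpM2l //.
exact: rho_upper_le_XY lam_ge0 (le12 j) (atanassov_le_bigmax_bigmin _ i2).
Qed.

Lemma S_neg_ge_XY : S_neg i2 <= S_neg i1.
Proof.
rewrite lerD2l lerN2; apply: ler_sum => j _; rewrite ler_wpM2l //.
exact: rho_lower_le_XY lam_ge0 (le12 j) (atanassov_le_bigmin_bigmax _ i1).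
Qed.

Lemma closeness_le_XY : closeness benefit r w lam i1 <= closeness benefit r w lam i2.
Proof.
by apply: ler_share; rewrite ?S_pos_ge0 ?S_neg_ge0 ?S_pos_le_XY ?S_neg_ge_XY.
Qed.

End Monotonicity.
End Topsis.

Theorem theorem6 (R : realFieldType) (n m : nat) (benefit : 'I_m -> bool)
  (r : 'I_n -> 'I_m -> IFV R) (w : 'I_m -> R) (lam : R)
  (hr : forall i j, is_IFV (r i j))
  (hw : forall j, 0 < w j <= 1)
  (hwsum : \sum_(j < m) w j = 1)
  (hlam : 1 <= lam)
  (i1 i2 : 'I_n) :
  ((forall j, le_XY (rbar benefit r i1 j) (rbar benefit r i2 j)) ->
     closeness benefit r w lam i1 <= closeness benefit r w lam i2) /\
  ((forall j, atanassov_le (rbar benefit r i1 j) (rbar benefit r i2 j)) ->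
     closeness benefit r w lam i1 <= closeness benefit r w lam i2).
Proof.
have w_ge0 j : 0 <= w j by have /andP[/ltW] := hw j.
have lam_ge0 : 0 <= lam by lra.
split=> [le12|sub12]; apply: closeness_le_XY => // j.
exact/atanassov_le_XY/sub12.
Qed.
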